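(* Let $(X,d,\theta)$ be a $\theta$-metric space, where $\theta$ is a $B$-action. Then the topological space $(X,\tau_d)$ is metrizable, i.e. there is a metric on $X$ whose metric topology equals $\tau_d$.
   Context: A $B$-action is a map $\theta:[0,\infty)\times[0,\infty)\to[0,\infty)$ that is continuous in each variable separately and satisfies: (i) $\theta(0,0)=0$ and $\theta(s,t)=\theta(t,s)$ for all $s,t\ge0$; (ii) $\theta(x,y)<\theta(s,t)$ whenever either $x\le s,\ y<t$ or $x<s,\ y\le t$; (iii) for each $m\in\mathrm{Im}(\theta)=\{\theta(s,t):s,t\ge0\}$ and each $t\in[0,m]$ there is $s\in[0,m]$ with $\theta(s,t)=m$; (iv) $\theta(s,0)\le s$ for all $s>0$. A $\theta$-metric on a non-empty set $X$ with respect to a $B$-action $\theta$ is a map $d:X\times X\to[0,\infty)$ such that for all $x,y,z\in X$: $d(x,y)=0$ iff $x=y$; $d(x,y)=d(y,x)$; $d(x,z)\le\theta(d(x,y),d(y,z))$. The topology $\tau_d$ consists of all $U\subseteq X$ such that for every $x\in U$ there is $r>0$ with $\{y\in X: d(x,y)<r\}\subseteq U$. *)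

From Stdlib Require Import Reals.
Open Scope R_scope.

(* A B-action theta : [0,oo) x [0,oo) -> [0,oo), represented as a total
   function R -> R -> R whose behaviour is only constrained on [0,oo)^2. *)
Definition B_action (theta : R -> R -> R) : Prop :=
  (forall s t, 0 <= s -> 0 <= t -> 0 <= theta s t) /\
  (forall t s0, 0 <= t -> 0 <= s0 -> forall eps, 0 < eps ->
     exists delta, 0 < delta /\ forall s, 0 <= s -> Rabs (s - s0) < delta ->
       Rabs (theta s t - theta s0 t) < eps) /\
  (forall s t0, 0 <= s -> 0 <= t0 -> forall eps, 0 < eps ->
     exists delta, 0 < delta /\ forall t, 0 <= t -> Rabs (t - t0) < delta ->
       Rabs (theta s t - theta s t0) < eps) /\
  theta 0 0 = 0 /\
  (forall s t, 0 <= s -> 0 <= t -> theta s t = theta t s) /\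
  (forall x y s t, 0 <= x -> 0 <= y -> 0 <= s -> 0 <= t ->
     ((x <= s /\ y < t) \/ (x < s /\ y <= t)) -> theta x y < theta s t) /\
  (forall m, (exists s t, 0 <= s /\ 0 <= t /\ theta s t = m) ->
     forall t, 0 <= t -> t <= m ->
       exists s, 0 <= s /\ s <= m /\ theta s t = m) /\
  (forall s, 0 < s -> theta s 0 <= s).

Definition theta_metric {X : Type} (theta : R -> R -> R) (d : X -> X -> R) : Prop :=
  (forall x y, 0 <= d x y) /\
  (forall x y, d x y = 0 <-> x = y) /\
  (forall x y, d x y = d y x) /\
  (forall x y z, d x z <= theta (d x y) (d y z)).

Definition tau {X : Type} (d : X -> X -> R) (U : X -> Prop) : Prop :=
  forall x, U x -> exists r, 0 < r /\ forall y, d x y < r -> U y.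

Definition is_metric {X : Type} (m : X -> X -> R) : Prop :=
  (forall x y, 0 <= m x y) /\
  (forall x y, m x y = 0 <-> x = y) /\
  (forall x y, m x y = m y x) /\
  (forall x y z, m x z <= m x y + m y z).

From Stdlib Require Import Reals Lra Lia Classical IndefiniteDescription.
Open Scope R_scope.

(* 1. For a B-action, theta a b is small as soon as a and b are small.  Hence
      a theta-metric d admits "three-step" moduli: for every eps > 0 there is
      delta > 0 such that three consecutive d-steps below delta give a d-step
      below eps.  Iterating gives scales r 0 >= r 1 >= ..., r (S n) <= r n / 2,
      where three steps below r (S n) make one step below r n.
   2. Frink's lemma (section ChainMetric): given such scales, say that (x, y)
      is within level c if d x y < r k whenever c < 2^-k, and let m x y be the
      infimum of the total levels of chains from x to y.  Splitting a chain at
      half its weight shows that a chain of weight s ends within level 2 s;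
      thus m is a metric, and small m-distances and small d-distances control
      each other uniformly.
   3. Two functions controlling each other uniformly generate the same
      topology tau, which gives the theorem. *)

Definition half_pow (n : nat) : R := (/2) ^ n.

Lemma half_pow_pos (n : nat) : 0 < half_pow n.
Proof. unfold half_pow; apply pow_lt; lra. Qed.

Lemma half_pow_S (n : nat) : half_pow (S n) = half_pow n / 2.
Proof. unfold half_pow; simpl; lra. Qed.

Lemma half_pow_antitone (j k : nat) : (j <= k)%nat -> half_pow k <= half_pow j.
Proof.
  induction 1 as [|k _ IH]; [lra|].
  rewrite half_pow_S; pose proof (half_pow_pos k); lra.
Qed.

Lemma half_pow_le_1 (n : nat) : half_pow n <= 1.
Proof.
  replace 1 with (half_pow 0) by reflexivity.
  apply half_pow_antitone; lia.
Qed.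

Lemma half_pow_small (eps : R) : 0 < eps -> exists k, half_pow k < eps.
Proof.
  intros Heps.
  destruct (pow_lt_1_zero (/2)) with (y := eps) as [N HN]; auto.
  { rewrite Rabs_pos_eq; lra. }
  exists N; specialize (HN N (le_n N)).
  rewrite Rabs_pos_eq in HN; [exact HN | left; apply half_pow_pos].
Qed.

(* A non-empty set of non-negative reals has an infimum (Stdlib only provides
   suprema, so we negate). *)
Lemma nonneg_inf (P : R -> Prop) :
  (exists s, P s) -> (forall s, P s -> 0 <= s) ->
  { m | 0 <= m /\ (forall s, P s -> m <= s) /\
        forall eps, 0 < eps -> exists s, P s /\ s < m + eps }.
Proof.
  intros Hne Hnn.
  set (E := fun v => exists s, P s /\ v = - s).
  assert (HE_bound : bound E).
  { exists 0; intros v (s & Hs & ->); pose proof (Hnn s Hs); lra. }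
  assert (HE_ne : exists v, E v).
  { destruct Hne as [s Hs]; exists (- s), s; auto. }
  destruct (completeness E HE_bound HE_ne) as [l [Hub Hleast]].
  exists (- l); split; [|split].
  - assert (l <= 0); [|lra].
    apply Hleast; intros v (s & Hs & ->); pose proof (Hnn s Hs); lra.
  - intros s Hs; assert (- s <= l) by (apply Hub; exists s; auto); lra.
  - intros eps Heps; apply NNPP; intros Hnone.
    assert (l <= l - eps); [|lra].
    apply Hleast; intros v (s & Hs & ->).
    destruct (Rle_lt_dec (- s) (l - eps)) as [Hle|Hlt]; [exact Hle|].
    exfalso; apply Hnone; exists s; split; [exact Hs | lra].
Qed.

Definition controls {X : Type} (d m : X -> X -> R) : Prop :=
  forall eps, 0 < eps -> exists delta, 0 < delta /\
    forall x y, d x y < delta -> m x y < eps.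

Lemma tau_of_controls {X : Type} (d m : X -> X -> R) (U : X -> Prop) :
  controls d m -> tau m U -> tau d U.
Proof.
  intros Hdm HU x Hx.
  destruct (HU x Hx) as [e [He HUe]].
  destruct (Hdm e He) as [delta [Hdelta Hsmall]].
  exists delta; split; [exact Hdelta|].
  intros y Hy; apply HUe, Hsmall, Hy.
Qed.

Definition three_step {X : Type} (d : X -> X -> R) (delta eps : R) : Prop :=
  forall x y z w, d x y < delta -> d y z < delta -> d z w < delta -> d x w < eps.

Lemma three_step_antitone {X : Type} (d : X -> X -> R) (delta delta' eps : R) :
  delta' <= delta -> three_step d delta eps -> three_step d delta' eps.
Proof. intros Hle H x y z w H1 H2 H3; apply (H x y z w); lra. Qed.

Section ChainMetric.

Variables (X : Type) (d : X -> X -> R) (r : nat -> R).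
Hypothesis d_nonneg : forall x y, 0 <= d x y.
Hypothesis d_zero : forall x y, d x y = 0 <-> x = y.
Hypothesis d_sym : forall x y, d x y = d y x.
Hypothesis r_pos : forall n, 0 < r n.
Hypothesis r_0_le_1 : r 0%nat <= 1.
Hypothesis r_halving : forall n, r (S n) <= r n / 2.
Hypothesis r_three_step : forall n, three_step d (r (S n)) (r n).

Lemma r_antitone (j k : nat) : (j <= k)%nat -> r k <= r j.
Proof.
  induction 1 as [|k _ IH]; [lra|].
  specialize (r_halving k); specialize (r_pos k); lra.
Qed.

Lemma r_le_half_pow (n : nat) : r n <= half_pow n.
Proof.
  induction n as [|n IH]; [exact r_0_le_1|].
  rewrite half_pow_S; specialize (r_halving n); lra.
Qed.

Lemma d_refl_lt_r (x : X) (k : nat) : d x x < r k.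
Proof. rewrite (proj2 (d_zero x x) eq_refl); apply r_pos. Qed.

Definition within (x y : X) (c : R) : Prop :=
  forall k, c < half_pow k -> d x y < r k.

Lemma within_sym (x y : X) (c : R) : within x y c -> within y x c.
Proof. intros H k Hk; rewrite d_sym; auto. Qed.

Lemma within_1 (x y : X) : within x y 1.
Proof. intros k Hk; pose proof (half_pow_le_1 k); lra. Qed.

Inductive chain : nat -> X -> X -> R -> Prop :=
| chain_nil : forall x, chain 0 x x 0
| chain_cons : forall n x y z c s,
    within x y c -> 0 <= c -> chain n y z s -> chain (S n) x z (c + s).

Lemma chain_nonneg (n : nat) (x z : X) (s : R) : chain n x z s -> 0 <= s.
Proof. induction 1; lra. Qed.

Lemma chain_app (n : nat) (x y : X) (s1 : R) : chain n x y s1 ->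
  forall k z s2, chain k y z s2 -> chain (n + k) x z (s1 + s2).
Proof.
  induction 1 as [x|n x y' y c s Hxy Hc _ IH]; intros k z s2 H2.
  - replace (0 + s2) with s2 by ring; exact H2.
  - replace (c + s + s2) with (c + (s + s2)) by ring.
    econstructor; eauto.
Qed.

Lemma chain_rev (n : nat) (x z : X) (s : R) :
  chain n x z s -> exists n', chain n' z x s.
Proof.
  induction 1 as [x|n x y z c s Hxy Hc _ [n' IH]].
  - exists 0%nat; constructor.
  - exists (n' + 1)%nat.
    replace (c + s) with (s + (c + 0)) by ring.
    eapply chain_app; [exact IH|].
    econstructor; [apply within_sym; exact Hxy | exact Hc | constructor].
Qed.

Lemma chain_split (n : nat) (x z : X) (s : R) : chain n x z s ->
  forall h, 0 <= h -> h < s ->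
  exists k1 k2 y y' a c b, chain k1 x y a /\ within y y' c /\ 0 <= c /\
    chain k2 y' z b /\ a <= h /\ h < a + c /\ s = a + c + b /\ n = S (k1 + k2).
Proof.
  induction 1 as [x|n x y z c s Hxy Hc Hyz IH]; intros h Hh0 Hhs; [lra|].
  destruct (Rlt_le_dec h c) as [Hhc|Hch].
  - exists 0%nat, n, x, y, 0, c, s.
    repeat split; auto; try constructor; lra.
  - destruct (IH (h - c)) as
      (k1 & k2 & y1 & y1' & a & c' & b & Ha & Hw & Hc' & Hb & Hah & Hac & Hs & Hn);
      [lra | lra |].
    exists (S k1), k2, y1, y1', (c + a), c', b.
    repeat split; auto; try lra; try lia.
    econstructor; eauto.
Qed.

Lemma chain_weight_zero (n : nat) (x z : X) (s : R) :
  chain n x z s -> s = 0 -> forall k, d x z < r k.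
Proof.
  induction 1 as [x|n x y z c s Hxy Hc Hyz IH]; intros Hs0 k; [apply d_refl_lt_r|].
  pose proof (chain_nonneg _ _ _ _ Hyz).
  apply (r_three_step k x y z z).
  - apply Hxy; pose proof (half_pow_pos (S k)); lra.
  - apply IH; lra.
  - apply d_refl_lt_r.
Qed.

(* Frink's inequality: the ends of a chain of weight s are within level 2 s.
   By strong induction on the length, cutting the chain at weight s / 2. *)
Lemma chain_within (N n : nat) (x z : X) (s : R) :
  (n <= N)%nat -> chain n x z s -> within x z (2 * s).
Proof.
  revert n x z s; induction N as [|N IH]; intros n x z s Hn Hc.
  - inversion Hc; subst; [|lia].
    intros k _; apply d_refl_lt_r.
  - pose proof (chain_nonneg _ _ _ _ Hc) as Hs.
    destruct (Req_dec s 0) as [Hs0|Hs0].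
    { intros k _; exact (chain_weight_zero _ _ _ _ Hc Hs0 k). }
    destruct (chain_split _ _ _ _ Hc (s / 2)) as
      (k1 & k2 & y & y' & a & c & b & Ha & Hw & Hc0 & Hb & Hah & Hac & Hsum & Hlen);
      [lra | lra |].
    assert (Hleft := IH k1 x y a ltac:(lia) Ha).
    assert (Hright := IH k2 y' z b ltac:(lia) Hb).
    pose proof (chain_nonneg _ _ _ _ Ha); pose proof (chain_nonneg _ _ _ _ Hb).
    intros k Hk; pose proof (half_pow_S k).
    apply (r_three_step k x y y' z).
    + apply Hleft; lra.
    + apply Hw; lra.
    + apply Hright; lra.
Qed.

Definition chain_weight (x y : X) (s : R) : Prop := exists n, chain n x y s.

Lemma chain_weight_exists (x y : X) : exists s, chain_weight x y s.
Proof.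
  exists (1 + 0), 1%nat.
  econstructor; [apply within_1 | lra | constructor].
Qed.

Lemma chain_weight_nonneg (x y : X) (s : R) : chain_weight x y s -> 0 <= s.
Proof. intros [n Hc]; exact (chain_nonneg _ _ _ _ Hc). Qed.

Definition chain_metric (x y : X) : R :=
  proj1_sig (nonneg_inf (chain_weight x y)
                        (chain_weight_exists x y) (chain_weight_nonneg x y)).

Lemma chain_metric_spec (x y : X) :
  0 <= chain_metric x y /\
  (forall s, chain_weight x y s -> chain_metric x y <= s) /\
  (forall eps, 0 < eps -> exists s, chain_weight x y s /\ s < chain_metric x y + eps).
Proof. unfold chain_metric; exact (proj2_sig (nonneg_inf _ _ _)). Qed.

Lemma chain_metric_nonneg (x y : X) : 0 <= chain_metric x y.
Proof. exact (proj1 (chain_metric_spec x y)). Qed.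

Lemma chain_metric_le (n : nat) (x y : X) (s : R) :
  chain n x y s -> chain_metric x y <= s.
Proof. intros Hc; apply (chain_metric_spec x y); exists n; exact Hc. Qed.

Lemma chain_metric_approx (x y : X) (eps : R) : 0 < eps ->
  exists n s, chain n x y s /\ s < chain_metric x y + eps.
Proof.
  intros Heps; destruct (chain_metric_spec x y) as (_ & _ & Happrox).
  destruct (Happrox eps Heps) as (s & [n Hc] & Hs); exists n, s; auto.
Qed.

Lemma chain_metric_sym_le (x y : X) : chain_metric y x <= chain_metric x y.
Proof.
  apply Rle_plus_epsilon; intros eps Heps.
  destruct (chain_metric_approx x y eps Heps) as (n & s & Hc & Hs).
  destruct (chain_rev _ _ _ _ Hc) as [n' Hc'].
  pose proof (chain_metric_le _ _ _ _ Hc'); lra.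
Qed.

Lemma chain_metric_triangle (x y z : X) :
  chain_metric x z <= chain_metric x y + chain_metric y z.
Proof.
  apply Rle_plus_epsilon; intros eps Heps.
  destruct (chain_metric_approx x y (eps / 2)) as (n1 & s1 & Hc1 & Hs1); [lra|].
  destruct (chain_metric_approx y z (eps / 2)) as (n2 & s2 & Hc2 & Hs2); [lra|].
  pose proof (chain_metric_le _ _ _ _ (chain_app _ _ _ _ Hc1 _ _ _ Hc2)); lra.
Qed.

(* A d-step below r k is a one-step chain of weight 2^-k. *)
Lemma chain_metric_le_of_d (k : nat) (x y : X) :
  d x y < r k -> chain_metric x y <= half_pow k.
Proof.
  intros Hxy; replace (half_pow k) with (half_pow k + 0) by ring.
  apply (chain_metric_le 1).
  econstructor; [| left; apply half_pow_pos | constructor].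
  intros j Hj; destruct (Compare_dec.le_lt_dec k j) as [Hkj|Hjk].
  - pose proof (half_pow_antitone _ _ Hkj); lra.
  - pose proof (r_antitone j k ltac:(lia)); lra.
Qed.

(* Conversely, by Frink's inequality, a small chain metric forces a small d. *)
Lemma d_lt_of_chain_metric (k : nat) (x y : X) :
  chain_metric x y < half_pow (S k) -> d x y < r k.
Proof.
  intros Hm.
  destruct (chain_metric_approx x y (half_pow (S k) - chain_metric x y))
    as (n & s & Hc & Hs); [lra|].
  apply (chain_within n n x y s (le_n n) Hc).
  rewrite half_pow_S in Hs; lra.
Qed.

Lemma chain_metric_is_metric : is_metric chain_metric.
Proof.
  split; [|split; [|split]].
  - exact chain_metric_nonneg.
  - intros x y; split; intros Hxy.
    + apply d_zero; destruct (Rle_lt_dec (d x y) 0) as [Hle|Hpos].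
      { pose proof (d_nonneg x y); lra. }
      exfalso; destruct (half_pow_small (d x y) Hpos) as [k Hk].
      assert (d x y < r k) by (apply d_lt_of_chain_metric; rewrite Hxy; apply half_pow_pos).
      pose proof (r_le_half_pow k); lra.
    + subst; apply Rle_antisym; [|apply chain_metric_nonneg].
      apply (chain_metric_le 0); constructor.
  - intros x y; apply Rle_antisym; apply chain_metric_sym_le.
  - exact chain_metric_triangle.
Qed.

Lemma d_controls_chain_metric : controls d chain_metric.
Proof.
  intros eps Heps; destruct (half_pow_small eps Heps) as [k Hk].
  exists (r k); split; [apply r_pos|].
  intros x y Hxy; pose proof (chain_metric_le_of_d k x y Hxy); lra.
Qed.

Lemma chain_metric_controls_d : controls chain_metric d.
Proof.
  intros eps Heps; destruct (half_pow_small eps Heps) as [k Hk].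
  exists (half_pow (S k)); split; [apply half_pow_pos|].
  intros x y Hxy; pose proof (d_lt_of_chain_metric k x y Hxy).
  pose proof (r_le_half_pow k); lra.
Qed.

End ChainMetric.

Fixpoint scales (st : R -> R) (n : nat) : R :=
  match n with
  | O => 1
  | S k => Rmin (st (scales st k)) (scales st k / 2)
  end.

Lemma three_step_scales {X : Type} (d : X -> X -> R) :
  (forall eps, 0 < eps -> exists delta, 0 < delta /\ three_step d delta eps) ->
  exists r : nat -> R, r 0%nat <= 1 /\ (forall n, 0 < r n) /\
    (forall n, r (S n) <= r n / 2) /\ (forall n, three_step d (r (S n)) (r n)).
Proof.
  intros Hmod.
  destruct (functional_choice
              (fun eps delta => 0 < eps -> 0 < delta /\ three_step d delta eps))
    as [st Hst].
  { intros eps; destruct (Rlt_le_dec 0 eps) as [Heps|Heps].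
    - destruct (Hmod eps Heps) as [delta Hdelta]; exists delta; auto.
    - exists 0; intros; lra. }
  assert (Hpos : forall n, 0 < scales st n).
  { induction n as [|n IH]; simpl; [lra|].
    destruct (Hst _ IH); apply Rmin_glb_lt; lra. }
  exists (scales st); split; [simpl; lra|]; split; [exact Hpos|]; split.
  - intros n; apply Rmin_r.
  - intros n; destruct (Hst _ (Hpos n)) as [_ H3].
    eapply three_step_antitone; [apply Rmin_l | exact H3].
Qed.

(* Separate continuity and strict monotonicity of a B-action give joint
   continuity at (0, 0): theta a b is small when a and b are. *)
Lemma B_action_small (theta : R -> R -> R) : B_action theta ->
  forall eps, 0 < eps -> exists delta, 0 < delta /\
    forall a b, 0 <= a -> 0 <= b -> a < delta -> b < delta -> theta a b < eps.
Proof.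
  intros (_ & Hcont1 & Hcont2 & H00 & _ & Hmono & _) eps Heps.
  destruct (Hcont2 0 0 (Rle_refl 0) (Rle_refl 0) eps Heps) as [d0 [Hd0 Hcont_0]].
  set (t0 := d0 / 2).
  assert (Ht0 : theta 0 t0 < eps).
  { assert (H := Hcont_0 t0 ltac:(unfold t0; lra)
                  ltac:(rewrite Rminus_0_r, Rabs_pos_eq; unfold t0; lra)).
    rewrite H00, Rminus_0_r in H; pose proof (Rle_abs (theta 0 t0)); lra. }
  destruct (Hcont1 t0 0 ltac:(unfold t0; lra) (Rle_refl 0) (eps - theta 0 t0)
              ltac:(lra)) as [d1 [Hd1 Hcont_t0]].
  exists (Rmin d1 t0); split; [apply Rmin_glb_lt; unfold t0; lra|].
  intros a b Ha Hb Ha' Hb'.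
  pose proof (Rmin_l d1 t0); pose proof (Rmin_r d1 t0).
  assert (Hab : theta a b < theta a t0) by (apply Hmono; unfold t0 in *; lra).
  assert (Hat0 := Hcont_t0 a Ha ltac:(rewrite Rminus_0_r, Rabs_pos_eq; lra)).
  pose proof (Rle_abs (theta a t0 - theta 0 t0)); lra.
Qed.

(* Hence a theta-metric has three-step moduli: apply the triangle inequality
   twice, each time with arguments below the threshold of B_action_small. *)
Lemma theta_metric_three_step {X : Type} (theta : R -> R -> R) (d : X -> X -> R) :
  B_action theta -> theta_metric theta d ->
  forall eps, 0 < eps -> exists delta, 0 < delta /\ three_step d delta eps.
Proof.
  intros Htheta (Hnn & _ & _ & Htri) eps Heps.
  destruct (B_action_small theta Htheta eps Heps) as [d1 [Hd1 Hsmall1]].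
  destruct (B_action_small theta Htheta d1 Hd1) as [d2 [Hd2 Hsmall2]].
  exists (Rmin d1 d2); split; [apply Rmin_glb_lt; lra|].
  intros x y z w Hxy Hyz Hzw.
  pose proof (Rmin_l d1 d2); pose proof (Rmin_r d1 d2).
  assert (Hxz : d x z < d1).
  { eapply Rle_lt_trans; [apply (Htri x y z) | apply Hsmall2; auto; lra]. }
  eapply Rle_lt_trans; [apply (Htri x z w) | apply Hsmall1; auto; lra].
Qed.

Theorem mainTheorem6 (X : Type) (theta : R -> R -> R) (d : X -> X -> R)
  (HX : inhabited X) (Htheta : B_action theta) (Hd : theta_metric theta d) :
  exists m : X -> X -> R, is_metric m /\ (forall U : X -> Prop, tau m U <-> tau d U).
Proof.
  destruct (three_step_scales d (theta_metric_three_step theta d Htheta Hd))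
    as (r & Hr0 & Hrpos & Hrhalf & Hr3).
  destruct Hd as (Hnn & Hzero & Hsym & _).
  exists (chain_metric X d r); split.
  - apply chain_metric_is_metric; assumption.
  - intros U; split; apply tau_of_controls.
    + apply d_controls_chain_metric; assumption.
    + apply chain_metric_controls_d; assumption.
Qed.
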